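(* Let $n \ge 1$, let $\beta_w, \beta_n \in (0,1)$ with $\beta_n < \beta_w$, and let $w_1, \dots, w_n \in \mathbb{R}_{\ge 0}$ with $W := \sum_{i=1}^n w_i \neq 0$. Then there exist integers $t_1, \dots, t_n \in \mathbb{Z}_{\ge 0}$, with $T := \sum_{i=1}^n t_i$, such that for every $S \subseteq [n]$ with $w(S) > \beta_w W$ we have $t(S) > \beta_n T$, and $$T \le \left\lceil \frac{\beta_w(1-\beta_w)}{\beta_w - \beta_n}\, n \right\rceil.$$
   Context: $[n] := \{1,\dots,n\}$. For $S \subseteq [n]$, $w(S) := \sum_{i\in S} w_i$ and $t(S) := \sum_{i \in S} t_i$. (This is the upper bound for the Weight Qualification problem, which asks to minimize $T$ subject to the displayed constraint.) *)

From mathcomp Require Import all_boot all_order all_algebra.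
From mathcomp Require Import reals.
Set Implicit Arguments. Unset Strict Implicit. Unset Printing Implicit Defensive.
Import Order.TTheory GRing.Theory Num.Theory.
Local Open Scope ring_scope.

Definition wsum (R : realType) (n : nat) (w : 'I_n -> R) (S : {set 'I_n}) : R :=
  \sum_(i in S) w i.

Definition tsum (n : nat) (t : 'I_n -> nat) (S : {set 'I_n}) : nat :=
  (\sum_(i in S) t i)%N.

(** Allocate tickets by the stationary divisor method with rounding threshold
    [1 - bw]: choose a scale [s > 0] and let [t_i] be [s w_i] rounded so that
    [s w_i - bw <= t_i <= s w_i + 1 - bw]; any total [T] is achievable by
    handing out tickets one at a time.  Summing [(1_S(i) - bw) t_i] then gives
    [t(S) - bw T >= s (w(S) - bw W) - n bw (1 - bw)], and when [w(S) > bw W]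
    the right-hand side exceeds [-(bw - bn) T] as soon as
    [T >= bw (1 - bw) n / (bw - bn)], i.e. [t(S) > bn T]. *)

From mathcomp Require Import all_boot all_order all_algebra.
From mathcomp Require Import reals.
From mathcomp Require Import lra.
Set Implicit Arguments.
Unset Strict Implicit.
Unset Printing Implicit Defensive.
Import Order.TTheory GRing.Theory Num.Theory.
Local Open Scope ring_scope.

Lemma big_setT (T : Type) (idx : T) (op : T -> T -> T) (I : finType)
    (F : I -> T) :
  \big[op/idx]_(i in [set: I]) F i = \big[op/idx]_i F i.
Proof. by apply: eq_bigl => i; rewrite in_setT. Qed.

Lemma sum_centered_indicator (R : pzRingType) (I : finType) (S : {set I})
    (c : R) (x : I -> R) :
  \sum_i ((i \in S)%:R - c) * x i = \sum_(i in S) x i - c * \sum_i x i.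
Proof.
rewrite mulr_sumr [\sum_(i in S) _]big_mkcond -sumrB; apply: eq_bigr => i _.
by case: (i \in S); rewrite /= mulrBl ?mul1r ?mul0r.
Qed.

Section StationaryRounding.

Variables (R : realFieldType) (I : finType) (bw : R) (w : I -> R).
Hypotheses (bw_gt0 : 0 < bw) (bw_lt1 : bw < 1) (w_ge0 : forall i, 0 <= w i).

Definition stationary_rounding (s : R) (t : I -> nat) :=
  forall i, s * w i - bw <= (t i)%:R <= s * w i + 1 - bw.

Lemma stationary_rounding0 : stationary_rounding 0 (fun=> 0%N).
Proof. by move=> i; rewrite mul0r sub0r add0r oppr_le0 subr_ge0 !ltW. Qed.

(* The next ticket goes to an index minimising [(t_i + bw) / w_i], which is
   exactly the scale at which its rounding would move up. *)
Lemma stationary_roundingS (i0 : I) s t :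
  0 < w i0 -> stationary_rounding s t ->
  exists s' t', [/\ 0 < s', (\sum_i t' i = (\sum_i t i).+1)%N
                  & stationary_rounding s' t'].
Proof.
move=> w_i0 round_st.
pose F j := ((t j)%:R + bw) / w j.
have [i w_i_gt0 F_min] := arg_minP (P := fun j => 0 < w j) F w_i0.
have F_i_w : F i * w i = (t i)%:R + bw by rewrite /F divfK ?gt_eqF.
have s_le_Fi : s <= F i.
  rewrite /F ler_pdivlMr //; have /andP[lo _] := round_st i; lra.
have Fi_gt0 : 0 < F i by rewrite /F divr_gt0 // ltr_pwDr.
exists (F i), (fun j => if j == i then (t j).+1 else t j); split => //.
  rewrite (bigD1 i) //= eqxx addSn [in RHS](bigD1 i) //=.
  by congr (_ + _).+1; apply: eq_bigr => j /negPf ->.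
move=> j; case: eqP => [->|_].
  by rewrite -natr1 F_i_w; apply/andP; split; lra.
have /andP[lo hi] := round_st j.
have [w_j_gt0|] := ltP 0 (w j).
  have := F_min j w_j_gt0; rewrite {2}/F ler_pdivlMr // => Fi_wj.
  have : s * w j <= F i * w j by rewrite ler_wpM2r.
  by move=> ?; apply/andP; split; lra.
move=> w_j_le0; have w_j0 : w j = 0 by apply: le_anti; rewrite w_j_le0 w_ge0.
by rewrite w_j0 !mulr0 in lo hi *; rewrite lo hi.
Qed.

Lemma exists_stationary_rounding (i0 : I) (N : nat) :
  0 < w i0 ->
  exists s t, [/\ 0 < s, (\sum_i t i = N.+1)%N & stationary_rounding s t].
Proof.
move=> w_i0; elim: N => [|N [s [t [_ sum_t round_st]]]].
  have [s [t [s_gt0 sum_t round_st]]] :=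
    stationary_roundingS w_i0 stationary_rounding0.
  by exists s, t; rewrite sum_t big1.
have [s' [t' [s'_gt0 sum_t' round_st']]] := stationary_roundingS w_i0 round_st.
by exists s', t'; rewrite sum_t' sum_t.
Qed.

Lemma stationary_rounding_term (b : bool) (y z : R) :
  z - bw <= y <= z + 1 - bw ->
  (b%:R - bw) * z - bw * (1 - bw) <= (b%:R - bw) * y.
Proof.
move=> /andP[lo hi]; case: b => /=.
  have : (1 - bw) * (z - bw) <= (1 - bw) * y by rewrite ler_wpM2l // subr_ge0 ltW.
  lra.
have : bw * y <= bw * (z + 1 - bw) by rewrite ler_wpM2l // ltW.
lra.
Qed.

Lemma stationary_rounding_deviation s t (S : {set I}) :
  stationary_rounding s t ->
  s * (\sum_(i in S) w i - bw * \sum_i w i) - bw * (1 - bw) * #|I|%:R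
    <= (\sum_(i in S) t i)%:R - bw * (\sum_i t i)%:R.
Proof.
move=> round_st.
have -> : bw * (1 - bw) * #|I|%:R = \sum_(i : I) bw * (1 - bw).
  by rewrite sumr_const mulr_natr.
rewrite !natr_sum -!sum_centered_indicator mulr_sumr -sumrB.
apply: ler_sum => i _; rewrite mulrCA.
exact: stationary_rounding_term (round_st i).
Qed.

End StationaryRounding.

Theorem corollary1 (R : realType) (n : nat) (bw bn : R) (w : 'I_n -> R) :
  (1 <= n)%N ->
  0 < bw < 1 -> 0 < bn < 1 -> bn < bw ->
  (forall i, 0 <= w i) ->
  wsum w [set: 'I_n] != 0 ->
  exists t : 'I_n -> nat,
    (forall S : {set 'I_n},
        wsum w S > bw * wsum w [set: 'I_n] ->
        (tsum t S)%:R > bn * (tsum t [set: 'I_n])%:R) /\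
    ((tsum t [set: 'I_n])%:Z <= Num.ceil (bw * (1 - bw) / (bw - bn) * n%:R)).
Proof.
move=> n_gt0 /andP[bw_gt0 bw_lt1] _ bn_lt_bw w_ge0 W_neq0.
have [i0 w_i0] : exists i0, 0 < w i0.
  apply/existsP; apply: contraNT W_neq0 => /existsPn w_le0.
  rewrite /wsum big_setT; apply/eqP/big1 => i _.
  by apply: le_anti; rewrite w_ge0 andbT leNgt w_le0.
set c := bw * (1 - bw) / (bw - bn) * n%:R.
have c_gt0 : 0 < c by rewrite /c !mulr_gt0 ?invr_gt0 ?subr_gt0 ?ltr0n.
have [N ceil_c] : exists N, Num.ceil c = N.+1%:Z.
  have : 0 < Num.ceil c by rewrite ceil_gt0.
  by case: (Num.ceil c) => [[|N]|] // _; exists N.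
have [s [t [s_gt0 sum_t round_st]]] :=
  exists_stationary_rounding bw_gt0 bw_lt1 w_ge0 N w_i0.
have T_eq : tsum t [set: 'I_n] = N.+1 by rewrite /tsum big_setT.
exists t; split; last by rewrite T_eq ceil_c.
move=> S wS_big; rewrite T_eq.
have dev := stationary_rounding_deviation bw_gt0 bw_lt1 S round_st.
rewrite card_ord sum_t -big_setT in dev.
have excess_gt0 : 0 < s * (wsum w S - bw * wsum w [set: 'I_n]).
  by rewrite mulr_gt0 // subr_gt0.
have c_le_T : c <= N.+1%:R by have := ceil_ge c; rewrite ceil_c pmulrn.
have loss_le_gap : bw * (1 - bw) * n%:R <= (bw - bn) * N.+1%:R.
  by rewrite -ler_pdivrMl ?subr_gt0 // mulrA [_^-1 * _]mulrC.
move: dev excess_gt0 loss_le_gap; rewrite /tsum /wsum; lra.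
Qed.
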